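(* Let $\beta>0$, $\alpha=1/\beta$, $n\ge1$, and let $\sigma:\mathbb{R}\to\mathbb{R}$ be either ReLU, $\sigma(t)=\max(0,t)$, or LeakyReLU, $\sigma(t)=\max(kt,t)$ with fixed $k\in(0,1)$, applied coordinatewise to vectors. Let $\mathbf{x}^{n,\beta}\in\mathbb{H}^{n,\beta}$ and $\mathbf{x}^{n,\alpha}=p_{\mathbb{H}^{n,\beta}\to\mathbb{D}^{n,\alpha}}(\mathbf{x}^{n,\beta})$. Then the Lorentzian pointwise non-linearity and the M\''obius pointwise non-linearity are equivalent: $$p_{\mathbb{H}^{n,\beta}\to\mathbb{D}^{n,\alpha}}\big(\sigma^{\otimes^\beta}(\mathbf{x}^{n,\beta})\big)=\sigma^{\otimes^\alpha}(\mathbf{x}^{n,\alpha}).$$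
   Context: Lorentzian scalar product on $\mathbb{R}^{n+1}$: $\langle \mathbf{x},\mathbf{y}\rangle_{\mathcal{L}}=-x_0y_0+\sum_{i=1}^n x_iy_i$, $\|\mathbf{v}\|_{\mathcal{L}}=\sqrt{\langle\mathbf{v},\mathbf{v}\rangle_{\mathcal{L}}}$. Hyperboloid model $\mathbb{H}^{n,\beta}=\{\mathbf{x}\in\mathbb{R}^{n+1}:\langle\mathbf{x},\mathbf{x}\rangle_{\mathcal{L}}=-\beta,\ x_0>0\}$ with origin $\mathbf{0}=(\sqrt{\beta},0,\dots,0)$; tangent space at origin $\{\mathbf{v}\in\mathbb{R}^{n+1}:v_0=0\}$. Distance $d^\beta_{\mathbb{H}}(\mathbf{x},\mathbf{y})=\sqrt{\beta}\,\mathrm{arcosh}(-\langle\mathbf{x},\mathbf{y}\rangle_{\mathcal{L}}/\beta)$. Exponential map at origin: $\exp^\beta_{\mathbf{0}}(\mathbf{v})=\cosh(\|\mathbf{v}\|_{\mathcal{L}}/\sqrt{\beta})\mathbf{0}+\sqrt{\beta}\sinh(\|\mathbf{v}\|_{\mathcal{L}}/\sqrt{\beta})\mathbf{v}/\|\mathbf{v}\|_{\mathcal{L}}$ for $\mathbf{v}\ne0$, $\exp^\beta_{\mathbf{0}}(0)=\mathbf{0}$. Logarithmic map at origin: $\log^\beta_{\mathbf{0}}(\mathbf{y})=d^\beta_{\mathbb{H}}(\mathbf{0},\mathbf{y})\frac{\mathbf{y}+\frac1\beta\langle\mathbf{0},\mathbf{y}\rangle_{\mathcal{L}}\mathbf{0}}{\|\mathbf{y}+\frac1\beta\langle\mathbf{0},\mathbf{y}\rangle_{\mathcal{L}}\mathbf{0}\|_{\mathcal{L}}}$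 for $\mathbf{y}\ne\mathbf{0}$, $\log^\beta_{\mathbf{0}}(\mathbf{0})=0$. Lorentzian pointwise non-linearity: writing $\log^\beta_{\mathbf{0}}(\mathbf{x})=(v_0,\dots,v_n)$, $\sigma^{\otimes^\beta}(\mathbf{x})=\exp^\beta_{\mathbf{0}}\big((0,\sigma(v_1),\dots,\sigma(v_n))\big)$. Poincar\'e ball $\mathbb{D}^{n,\alpha}=\{\mathbf{x}\in\mathbb{R}^n:\alpha\|\mathbf{x}\|^2<1\}$ with $\exp^\alpha_{\mathbf{0}}(\mathbf{v})=\tanh(\sqrt{\alpha}\|\mathbf{v}\|)\frac{\mathbf{v}}{\sqrt{\alpha}\|\mathbf{v}\|}$ and $\log^\alpha_{\mathbf{0}}(\mathbf{y})=\tanh^{-1}(\sqrt{\alpha}\|\mathbf{y}\|)\frac{\mathbf{y}}{\sqrt{\alpha}\|\mathbf{y}\|}$ for nonzero arguments, both mapping $0$ to $0$. M\''obius pointwise non-linearity: $\sigma^{\otimes^\alpha}(\mathbf{x})=\exp^\alpha_{\mathbf{0}}(\sigma(\log^\alpha_{\mathbf{0}}(\mathbf{x})))$. Isometry $p_{\mathbb{H}^{n,\beta}\to\mathbb{D}^{n,\alpha}}(x_0,x_1,\dots,x_n)=\frac{\sqrt{\beta}(x_1,\dots,x_n)}{\sqrt{\beta}+x_0}$. *)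

From Stdlib Require Import Reals Lra ClassicalDescription.
Open Scope R_scope.

(* Vectors in R^(n+1) (hyperboloid side) are functions nat -> R, only the
   coordinates 0..n matter.  Vectors in R^n (Poincare side) are functions
   nat -> R, only coordinates 0..n-1 matter. *)

Fixpoint sum1 (m : nat) (f : nat -> R) : R :=
  match m with O => 0 | S k => sum1 k f + f (S k) end.

Fixpoint sum0 (m : nat) (f : nat -> R) : R :=
  match m with O => 0 | S k => sum0 k f + f k end.

Definition arcosh (x : R) : R := ln (x + sqrt (x ^ 2 - 1)).
Definition artanh (x : R) : R := / 2 * ln ((1 + x) / (1 - x)).

Definition lor (n : nat) (x y : nat -> R) : R := - (x 0%nat * y 0%nat) + sum1 n (fun i => x i * y i).
Definition lnorm (n : nat) (v : nat -> R) : R := sqrt (lor n v v).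

Definition in_H (n : nat) (beta : R) (x : nat -> R) : Prop :=
  lor n x x = - beta /\ 0 < x 0%nat.

Definition originH (beta : R) : nat -> R :=
  fun i => if Nat.eqb i 0 then sqrt beta else 0.

Definition veqH (n : nat) (x y : nat -> R) : Prop := forall i, (i <= n)%nat -> x i = y i.
Definition veqD (n : nat) (x y : nat -> R) : Prop := forall i, (i < n)%nat -> x i = y i.

Definition zeroV : nat -> R := fun _ => 0.

Definition distH (n : nat) (beta : R) (x y : nat -> R) : R :=
  sqrt beta * arcosh (- lor n x y / beta).

Definition expH (n : nat) (beta : R) (v : nat -> R) : nat -> R :=
  if excluded_middle_informative (veqH n v zeroV) then originH beta
  else fun i => cosh (lnorm n v / sqrt beta) * originH beta i
               + sqrt beta * sinh (lnorm n v / sqrt beta) * v i / lnorm n v.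

Definition logH (n : nat) (beta : R) (y : nat -> R) : nat -> R :=
  if excluded_middle_informative (veqH n y (originH beta)) then zeroV
  else let w := fun i => y i + / beta * lor n (originH beta) y * originH beta i in
       fun i => distH n beta (originH beta) y * w i / lnorm n w.

Definition lorentz_nl (n : nat) (beta : R) (sigma : R -> R) (x : nat -> R) : nat -> R :=
  let v := logH n beta x in
  expH n beta (fun i => if Nat.eqb i 0 then 0 else sigma (v i)).

Definition enorm (n : nat) (v : nat -> R) : R := sqrt (sum0 n (fun i => v i ^ 2)).

Definition expD (n : nat) (alpha : R) (v : nat -> R) : nat -> R :=
  if excluded_middle_informative (veqD n v zeroV) then zeroV
  else fun i => tanh (sqrt alpha * enorm n v) * v i / (sqrt alpha * enorm n v).

Definition logD (n : nat) (alpha : R) (y : nat -> R) : nat -> R :=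
  if excluded_middle_informative (veqD n y zeroV) then zeroV
  else fun i => artanh (sqrt alpha * enorm n y) * y i / (sqrt alpha * enorm n y).

Definition mobius_nl (n : nat) (alpha : R) (sigma : R -> R) (x : nat -> R) : nat -> R :=
  let v := logD n alpha x in expD n alpha (fun i => sigma (v i)).

(* isometry p : H^{n,beta} -> D^{n,alpha}; output coordinate i is input coordinate i+1 *)
Definition pHD (beta : R) (x : nat -> R) : nat -> R :=
  fun i => sqrt beta * x (S i) / (sqrt beta + x 0%nat).

Definition relu (t : R) : R := Rmax 0 t.
Definition leaky_relu (k : R) (t : R) : R := Rmax (k * t) t.

(** Both non-linearities are radial at the origin: a logarithmic map sends a
    point to a positive multiple of its spatial part, and an exponential map
    sends a tangent vector to a point whose spatial part is a positive
    multiple of it.  For a point of the hyperboloid with time coordinate [x0]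
    and spatial radius [r], so that [x0^2 = b^2 + r^2] with [b = sqrt beta],
    the half-angle identities [arcosh (x0 / b) = 2 artanh (r / (b + x0))] and
    [sinh t / (1 + cosh t) = tanh (t / 2)] give [log_D (p x) = log_H x / 2]
    and [p (exp_H v) = exp_D (v / 2)] on spatial coordinates.  ReLU and
    LeakyReLU commute with positive scalings, so the factor [1/2] passes
    through [sigma]. *)

From Stdlib Require Import Reals Lra Lia ClassicalDescription.
Open Scope R_scope.

Lemma sum1_ext n f g :
  (forall i, (1 <= i <= n)%nat -> f i = g i) -> sum1 n f = sum1 n g.
Proof.
  induction n as [|n IH]; intros H; simpl; [reflexivity|].
  rewrite IH by (intros; apply H; lia). rewrite (H (S n)) by lia. reflexivity.
Qed.

Lemma sum0_ext n f g :
  (forall i, (i < n)%nat -> f i = g i) -> sum0 n f = sum0 n g.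
Proof.
  induction n as [|n IH]; intros H; simpl; [reflexivity|].
  rewrite IH by (intros; apply H; lia). rewrite (H n) by lia. reflexivity.
Qed.

Lemma sum0_shift n f : sum0 n (fun i => f (S i)) = sum1 n f.
Proof. induction n as [|n IH]; simpl; [reflexivity| now rewrite IH]. Qed.

Lemma sum1_scal n c f : sum1 n (fun i => c * f i) = c * sum1 n f.
Proof. induction n as [|n IH]; simpl; [ring| rewrite IH; ring]. Qed.

Lemma sum1_eq0 n f : (forall i, (1 <= i <= n)%nat -> f i = 0) -> sum1 n f = 0.
Proof.
  intros H. rewrite (sum1_ext n f (fun i => 0 * f i)) by (intros i Hi; rewrite (H i Hi); ring).
  rewrite sum1_scal. ring.
Qed.

Lemma sum1_sq_nonneg n f : 0 <= sum1 n (fun i => f i ^ 2).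
Proof.
  induction n as [|n IH]; cbn [sum1]; [lra|]. pose proof (pow2_ge_0 (f (S n))). lra.
Qed.

Lemma sum1_sq_eq0 n f :
  sum1 n (fun i => f i ^ 2) = 0 -> forall i, (1 <= i <= n)%nat -> f i = 0.
Proof.
  induction n as [|n IH]; intros H i Hi; [lia|]. cbn [sum1] in H.
  pose proof (sum1_sq_nonneg n f). pose proof (pow2_ge_0 (f (S n))).
  destruct (Nat.eq_dec i (S n)) as [->|ne].
  - destruct (Req_dec (f (S n)) 0) as [|Hne]; [assumption|].
    exfalso. apply (pow_nonzero _ 2 Hne). lra.
  - apply IH; [lra|lia].
Qed.

Definition spatial_norm (n : nat) (v : nat -> R) : R :=
  sqrt (sum1 n (fun i => v i ^ 2)).

Lemma spatial_norm_ext n v w :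
  (forall i, (1 <= i <= n)%nat -> v i = w i) -> spatial_norm n v = spatial_norm n w.
Proof. intros H. unfold spatial_norm. f_equal. apply sum1_ext. intros; now rewrite H. Qed.

Lemma spatial_norm_scal n c v :
  0 <= c -> spatial_norm n (fun i => c * v i) = c * spatial_norm n v.
Proof.
  intros Hc. unfold spatial_norm.
  rewrite (sum1_ext _ _ (fun i => c ^ 2 * v i ^ 2)) by (intros; ring).
  rewrite sum1_scal, sqrt_mult by (apply pow2_ge_0 || apply sum1_sq_nonneg).
  now rewrite sqrt_pow2.
Qed.

Lemma spatial_norm_eq0 n v :
  spatial_norm n v = 0 -> forall i, (1 <= i <= n)%nat -> v i = 0.
Proof. intros H. apply sum1_sq_eq0, sqrt_eq_0; [apply sum1_sq_nonneg | exact H]. Qed.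

Lemma spatial_norm_zeroV n : spatial_norm n zeroV = 0.
Proof.
  unfold spatial_norm. rewrite sum1_eq0; [apply sqrt_0|]. intros; unfold zeroV; ring.
Qed.

Lemma lnorm_spatial n v : v 0%nat = 0 -> lnorm n v = spatial_norm n v.
Proof.
  intros H0. unfold lnorm, lor, spatial_norm. rewrite H0. f_equal.
  rewrite (sum1_ext n (fun i => v i * v i) (fun i => v i ^ 2)) by (intros; ring). ring.
Qed.

Lemma enorm_ext n v w : veqD n v w -> enorm n v = enorm n w.
Proof. intros H. unfold enorm. f_equal. apply sum0_ext. intros; now rewrite H. Qed.

Lemma enorm_shift n v : enorm n (fun i => v (S i)) = spatial_norm n v.
Proof. unfold enorm, spatial_norm. now rewrite (sum0_shift n (fun i => v i ^ 2)). Qed.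

(* The coordinate formulas below also hold at the zero vector: there the
   coordinate factor vanishes, whatever the junk value of [_ / 0]. *)
Lemma expD_coord n alpha v i : (i < n)%nat ->
  expD n alpha v i = tanh (sqrt alpha * enorm n v) / (sqrt alpha * enorm n v) * v i.
Proof.
  intros Hi. unfold expD. destruct excluded_middle_informative as [Hv|_].
  - rewrite (Hv i Hi). unfold zeroV. ring.
  - unfold Rdiv. ring.
Qed.

Lemma logD_coord n alpha y i : (i < n)%nat ->
  logD n alpha y i = artanh (sqrt alpha * enorm n y) / (sqrt alpha * enorm n y) * y i.
Proof.
  intros Hi. unfold logD. destruct excluded_middle_informative as [Hy|_].
  - rewrite (Hy i Hi). unfold zeroV. ring.
  - unfold Rdiv. ring.
Qed.

Lemma expD_veqD n alpha v w : veqD n v w -> veqD n (expD n alpha v) (expD n alpha w).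
Proof.
  intros H i Hi. rewrite !expD_coord by exact Hi. now rewrite (enorm_ext n v w H), H.
Qed.

Lemma originH_neq0 beta i : i <> 0%nat -> originH beta i = 0.
Proof. intros Hi. unfold originH. now rewrite (proj2 (Nat.eqb_neq i 0) Hi). Qed.

Lemma expH_coord0 n beta v : v 0%nat = 0 ->
  expH n beta v 0%nat = sqrt beta * cosh (spatial_norm n v / sqrt beta).
Proof.
  intros H0. unfold expH. destruct excluded_middle_informative as [Hv|_].
  - rewrite (spatial_norm_ext n v zeroV) by (intros; apply Hv; lia).
    rewrite spatial_norm_zeroV, Rdiv_0_l, cosh_0. unfold originH. simpl. ring.
  - rewrite H0, lnorm_spatial by exact H0. unfold originH. simpl. unfold Rdiv. ring.
Qed.

Lemma expH_coordS n beta v i : v 0%nat = 0 -> (1 <= i <= n)%nat ->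
  expH n beta v i = sqrt beta * sinh (spatial_norm n v / sqrt beta) / spatial_norm n v * v i.
Proof.
  intros H0 Hi. unfold expH. destruct excluded_middle_informative as [Hv|_].
  - rewrite (Hv i), originH_neq0 by lia. unfold zeroV. ring.
  - rewrite originH_neq0, lnorm_spatial by (assumption || lia). unfold Rdiv. ring.
Qed.

Lemma lor_originH n beta x : lor n (originH beta) x = - (sqrt beta * x 0%nat).
Proof.
  unfold lor. rewrite sum1_eq0; [unfold originH; simpl; ring|].
  intros i Hi. rewrite originH_neq0 by lia. ring.
Qed.

Lemma logH_coordS n beta x i : 0 < beta -> (1 <= i <= n)%nat ->
  logH n beta x i = sqrt beta * arcosh (x 0%nat / sqrt beta) / spatial_norm n x * x i.
Proof.
  intros Hbeta Hi. pose proof (sqrt_lt_R0 _ Hbeta) as Hb.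
  pose proof (sqrt_sqrt _ (Rlt_le _ _ Hbeta)) as Hbb.
  unfold logH. destruct excluded_middle_informative as [Hx|_].
  - rewrite (Hx i), originH_neq0 by lia. unfold zeroV. ring.
  - cbv zeta. rewrite lor_originH.
    rewrite lnorm_spatial by (unfold originH; simpl; field [Hbb]; lra).
    rewrite (spatial_norm_ext n _ x)
      by (intros j Hj; rewrite originH_neq0 by lia; ring).
    rewrite originH_neq0 by lia.
    unfold distH. rewrite lor_originH.
    replace (- - (sqrt beta * x 0%nat) / beta) with (x 0%nat / sqrt beta)
      by (field [Hbb]; lra).
    unfold Rdiv. ring.
Qed.

Lemma cosh_pos t : 0 < cosh t.
Proof. unfold cosh. pose proof (exp_pos t). pose proof (exp_pos (- t)). lra. Qed.

Lemma tanh_half t : sinh t / (1 + cosh t) = tanh (t / 2).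
Proof.
  set (y := t / 2). replace t with (y + y) by (unfold y; field).
  unfold tanh, sinh, cosh. rewrite exp_plus.
  replace (- (y + y)) with (- y + - y) by ring.
  rewrite exp_plus, exp_Ropp. pose proof (exp_pos y). set (e := exp y) in *.
  field. split; nra.
Qed.

Lemma arcosh_artanh b r x0 : 0 < b -> 0 < x0 -> 0 <= r -> x0 ^ 2 = b ^ 2 + r ^ 2 ->
  arcosh (x0 / b) = 2 * artanh (r / (b + x0)).
Proof.
  intros Hb Hx0 Hr Hpyth. assert (Hrx0 : r < x0) by nra.
  unfold arcosh, artanh.
  replace ((x0 / b) ^ 2 - 1) with ((x0 ^ 2 - b ^ 2) / b ^ 2) by (field; lra).
  rewrite Hpyth.
  replace ((b ^ 2 + r ^ 2 - b ^ 2) / b ^ 2) with ((r / b) ^ 2) by (field; lra).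
  rewrite sqrt_pow2 by (unfold Rdiv; apply Rmult_le_pos; [lra | left; apply Rinv_0_lt_compat; lra]).
  replace ((1 + r / (b + x0)) / (1 - r / (b + x0)))
    with ((b * (b + x0 + r)) / (b * (b + x0 - r))) by (field; lra).
  replace (b * (b + x0 + r)) with ((x0 + r) * (b + x0 - r)) by nra.
  replace ((x0 + r) * (b + x0 - r) / (b * (b + x0 - r))) with (x0 / b + r / b)
    by (field; lra).
  field.
Qed.

Lemma pHD_expH n beta v i : 0 < beta -> v 0%nat = 0 -> (i < n)%nat ->
  pHD beta (expH n beta v) i = expD n (/ beta) (fun j => v (S j) / 2) i.
Proof.
  intros Hbeta H0 Hi. pose proof (sqrt_lt_R0 _ Hbeta) as Hb.
  rewrite expD_coord by exact Hi.
  rewrite (enorm_ext n _ (fun j => / 2 * v (S j))) by (intros j _; unfold Rdiv; ring).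
  rewrite (enorm_shift n (fun k => / 2 * v k)), spatial_norm_scal, sqrt_inv by lra.
  unfold pHD. rewrite expH_coord0, expH_coordS by (assumption || lia).
  set (L := spatial_norm n v) in *.
  destruct (Req_dec L 0) as [HL|HL].
  - rewrite (spatial_norm_eq0 n v HL (S i)) by lia. unfold Rdiv. ring.
  - replace (/ sqrt beta * (/ 2 * L)) with (L / sqrt beta / 2) by (field; lra).
    rewrite <- tanh_half. pose proof (cosh_pos (L / sqrt beta)).
    field. repeat split; nra.
Qed.

Lemma logD_pHD n beta x i : 0 < beta -> in_H n beta x -> (i < n)%nat ->
  logD n (/ beta) (pHD beta x) i = logH n beta x (S i) / 2.
Proof.
  intros Hbeta [Hlor Hx0] Hi. pose proof (sqrt_lt_R0 _ Hbeta) as Hb.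
  pose proof (sqrt_sqrt _ (Rlt_le _ _ Hbeta)) as Hbb.
  set (b := sqrt beta) in *. set (x0 := x 0%nat) in *. set (r := spatial_norm n x).
  assert (Hr : 0 <= r) by apply sqrt_pos.
  assert (Hpyth : x0 ^ 2 = b ^ 2 + r ^ 2).
  { unfold r, spatial_norm. rewrite pow2_sqrt by apply sum1_sq_nonneg.
    unfold lor in Hlor.
    rewrite (sum1_ext n (fun i => x i * x i) (fun i => x i ^ 2)) in Hlor by (intros; ring).
    fold x0 in Hlor. nra. }
  rewrite logD_coord, logH_coordS by (assumption || lia).
  rewrite (enorm_ext n _ (fun j => b / (b + x0) * x (S j)))
    by (intros j _; unfold pHD; fold b x0; field; lra).
  rewrite (enorm_shift n (fun k => b / (b + x0) * x k)), spatial_norm_scal, sqrt_inv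
    by (unfold Rdiv; apply Rmult_le_pos; [lra | left; apply Rinv_0_lt_compat; lra]).
  fold b x0 r. rewrite (arcosh_artanh b r x0) by assumption.
  replace (/ b * (b / (b + x0) * r)) with (r / (b + x0)) by (field; lra).
  unfold pHD. fold b x0.
  destruct (Req_dec r 0) as [Hr0|Hr0].
  - rewrite (spatial_norm_eq0 n x Hr0 (S i)) by lia. unfold Rdiv. ring.
  - field. lra.
Qed.

Definition positively_homogeneous (f : R -> R) : Prop :=
  forall c t, 0 <= c -> f (c * t) = c * f t.

Lemma relu_positively_homogeneous : positively_homogeneous relu.
Proof.
  intros c t Hc. unfold relu. rewrite <- RmaxRmult by exact Hc. now rewrite Rmult_0_r.
Qed.

Lemma leaky_relu_positively_homogeneous k : positively_homogeneous (leaky_relu k).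
Proof.
  intros c t Hc. unfold leaky_relu. rewrite <- RmaxRmult by exact Hc.
  now replace (k * (c * t)) with (c * (k * t)) by ring.
Qed.

Lemma pHD_lorentz_nl n beta sigma x :
  0 < beta -> positively_homogeneous sigma -> in_H n beta x ->
  veqD n (pHD beta (lorentz_nl n beta sigma x)) (mobius_nl n (/ beta) sigma (pHD beta x)).
Proof.
  intros Hbeta Hsigma Hx i Hi. unfold lorentz_nl, mobius_nl.
  rewrite pHD_expH by (reflexivity || assumption).
  apply expD_veqD; [|exact Hi]. intros j Hj. cbn [Nat.eqb].
  rewrite logD_pHD by assumption.
  replace (logH n beta x (S j) / 2) with (/ 2 * logH n beta x (S j)) by field.
  rewrite Hsigma by lra. field.
Qed.

Theorem theorem3p3 (beta : R) (n : nat) (sigma : R -> R) (x : nat -> R) :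
  0 < beta ->
  (1 <= n)%nat ->
  (sigma = relu \/ exists k : R, 0 < k < 1 /\ sigma = leaky_relu k) ->
  in_H n beta x ->
  veqD n (pHD beta (lorentz_nl n beta sigma x))
         (mobius_nl n (/ beta) sigma (pHD beta x)).
Proof.
  intros Hbeta _ Hsigma Hx. apply pHD_lorentz_nl; [exact Hbeta | | exact Hx].
  destruct Hsigma as [-> | [k [_ ->]]].
  - apply relu_positively_homogeneous.
  - apply leaky_relu_positively_homogeneous.
Qed.
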